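(* Let $(P)$ be a property of C*-algebras. Assume: (1) the zero C*-algebra has $(P)$; (2) whenever $A$ is a C*-algebra and $I, J \subseteq A$ are ideals with $(P)$, then $I + J$ has $(P)$; (3) whenever $A$ is a C*-algebra, $\Lambda$ is a directed set, and $(I_\lambda)_{\lambda \in \Lambda}$ is a family of ideals of $A$ with $(P)$ such that $I_\lambda \subseteq I_\mu$ whenever $\lambda \le \mu$, then $\overline{\bigcup_{\lambda \in \Lambda} I_\lambda}$ has $(P)$. Then $(P)$ admits largest ideals.
   Context: All ideals are closed two-sided. $(P)$ admits largest ideals if for every C*-algebra $A$ there is an ideal $I \subseteq A$ with $(P)$ such that every ideal $J \subseteq A$ with $(P)$ satisfies $J \subseteq I$. *)

From Stdlib Require Import Reals ProofIrrelevance.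
From Coquelicot Require Import Complex.
Open Scope R_scope.

Record CStar := {
  car :> Type;
  zero : car;
  add : car -> car -> car;
  opp : car -> car;
  scal : C -> car -> car;
  mul : car -> car -> car;
  star : car -> car;
  norm : car -> R;
  add_assoc : forall x y z, add x (add y z) = add (add x y) z;
  add_comm : forall x y, add x y = add y x;
  add_0 : forall x, add zero x = x;
  add_opp : forall x, add (opp x) x = zero;
  scal_assoc : forall a b x, scal a (scal b x) = scal (Cmult a b) x;
  scal_1 : forall x, scal (RtoC 1) x = x;
  scal_distr_l : forall a x y, scal a (add x y) = add (scal a x) (scal a y);
  scal_distr_r : forall a b x, scal (Cplus a b) x = add (scal a x) (scal b x);
  mul_assoc : forall x y z, mul x (mul y z) = mul (mul x y) z;
  mul_distr_l : forall x y z, mul x (add y z) = add (mul x y) (mul x z);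
  mul_distr_r : forall x y z, mul (add x y) z = add (mul x z) (mul y z);
  mul_scal_l : forall a x y, mul (scal a x) y = scal a (mul x y);
  mul_scal_r : forall a x y, mul x (scal a y) = scal a (mul x y);
  star_invol : forall x, star (star x) = x;
  star_add : forall x y, star (add x y) = add (star x) (star y);
  star_scal : forall a x, star (scal a x) = scal (Cconj a) (star x);
  star_mul : forall x y, star (mul x y) = mul (star y) (star x);
  norm_eq0 : forall x, norm x = 0 -> x = zero;
  norm_triangle : forall x y, norm (add x y) <= norm x + norm y;
  norm_scal : forall a x, norm (scal a x) = Cmod a * norm x;
  norm_mul : forall x y, norm (mul x y) <= norm x * norm y;
  norm_cstar : forall x, norm (mul (star x) x) = norm x * norm x;
  complete : forall u : nat -> car,
    (forall eps, 0 < eps -> exists N, forall m n, (N <= m)%nat -> (N <= n)%nat ->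
        norm (add (u m) (opp (u n))) < eps) ->
    exists l, forall eps, 0 < eps -> exists N, forall n, (N <= n)%nat ->
        norm (add (u n) (opp l)) < eps
}.

Arguments zero {c}. Arguments add {c}. Arguments opp {c}. Arguments scal {c}.
Arguments mul {c}. Arguments star {c}. Arguments norm {c}.

Definition conv {A : CStar} (u : nat -> A) (x : A) : Prop :=
  forall eps, 0 < eps -> exists N, forall n, (N <= n)%nat -> norm (add (u n) (opp x)) < eps.

(* (sequential = metric) closure of a subset *)
Definition in_closure {A : CStar} (S : A -> Prop) (x : A) : Prop :=
  exists u : nat -> A, (forall n, S (u n)) /\ conv u x.

(* A (closed two-sided) ideal.  Closed two-sided ideals of a C*-algebra are
   automatically self-adjoint; we record this as a field (istar) so that the
   ideal carries its C*-algebra structure. *)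
Record ideal (A : CStar) := {
  iset : A -> Prop;
  i0 : iset zero;
  iadd : forall x y, iset x -> iset y -> iset (add x y);
  iopp : forall x, iset x -> iset (opp x);
  iscal : forall a x, iset x -> iset (scal a x);
  imull : forall a x, iset x -> iset (mul a x);
  imulr : forall a x, iset x -> iset (mul x a);
  istar : forall x, iset x -> iset (star x);
  iclosed : forall x, in_closure iset x -> iset x
}.
Arguments iset {A}.

Section IdealCStar.
Variables (A : CStar) (I : ideal A).
Let T := {x : A | iset I x}.
Let sv (x : T) : A := proj1_sig x.
Lemma sub_eq (x y : T) : sv x = sv y -> x = y.
Proof. destruct x, y; unfold sv; simpl; intros ->; f_equal; apply proof_irrelevance. Qed.

Definition ic_zero : T := exist _ zero (i0 A I).
Definition ic_add (x y : T) : T := exist _ (add (sv x) (sv y)) (iadd A I _ _ (proj2_sig x) (proj2_sig y)).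
Definition ic_opp (x : T) : T := exist _ (opp (sv x)) (iopp A I _ (proj2_sig x)).
Definition ic_scal a (x : T) : T := exist _ (scal a (sv x)) (iscal A I a _ (proj2_sig x)).
Definition ic_mul (x y : T) : T := exist _ (mul (sv x) (sv y)) (imull A I (sv x) _ (proj2_sig y)).
Definition ic_star (x : T) : T := exist _ (star (sv x)) (istar A I _ (proj2_sig x)).
Definition ic_norm (x : T) : R := norm (sv x).

Lemma ic_complete : forall u : nat -> T,
    (forall eps, 0 < eps -> exists N, forall m n, (N <= m)%nat -> (N <= n)%nat ->
        ic_norm (ic_add (u m) (ic_opp (u n))) < eps) ->
    exists l, forall eps, 0 < eps -> exists N, forall n, (N <= n)%nat ->
        ic_norm (ic_add (u n) (ic_opp l)) < eps.
Proof.
  intros u Hu.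
  destruct (complete A (fun n => sv (u n)) Hu) as [l Hl].
  assert (Il : iset I l).
  { apply iclosed. exists (fun n => sv (u n)); split; [intro n; exact (proj2_sig (u n)) | exact Hl]. }
  exists (exist _ l Il). exact Hl.
Qed.

Definition ideal_cstar : CStar.
Proof.
  refine (@Build_CStar T ic_zero ic_add ic_opp ic_scal ic_mul ic_star ic_norm
    _ _ _ _ _ _ _ _ _ _ _ _ _ _ _ _ _ _ _ _ _ _ ic_complete);
  try (intros; apply sub_eq; simpl; unfold sv; simpl; first
    [ apply add_assoc | apply add_comm | apply add_0 | apply add_opp
    | apply scal_assoc | apply scal_1 | apply scal_distr_l | apply scal_distr_r
    | apply mul_assoc | apply mul_distr_l | apply mul_distr_r | apply mul_scal_l
    | apply mul_scal_r | apply star_invol | apply star_add | apply star_scal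
    | apply star_mul | apply norm_eq0; assumption ]).
  - intros; apply norm_triangle.
  - intros; apply norm_scal.
  - intros; apply norm_mul.
  - intros; apply norm_cstar.
Defined.
End IdealCStar.
Arguments ideal_cstar {A}.

Definition directed {L : Type} (le : L -> L -> Prop) : Prop :=
  inhabited L /\ (forall l, le l l) /\
  (forall l m n, le l m -> le m n -> le l n) /\
  (forall l m, exists n, le l n /\ le m n).

Definition admits_largest_ideals (P : CStar -> Prop) : Prop :=
  forall A : CStar, exists I : ideal A, P (ideal_cstar I) /\
    forall J : ideal A, P (ideal_cstar J) -> forall x, iset J x -> iset I x.

(* Closed ideals with (P) are directed under inclusion: the zero ideal has (P), and so does
   the sum of two of them, because in a C*-algebra the sum of two closed ideals is again
   closed.  By (3) the closure of their union has (P), and it contains each of them.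

   Closedness of [I + J] rests on approximate units: for [j] in [J] and [delta > 0] there is
   [u] in [J] with [|j - j u| <= delta] and [|b - b u| <= |b|] for all [b].  Hence every [x]
   in [I] is as close to [I ∩ J] as to [J], which allows a limit of sums [p_n + q_n] to be
   rearranged into a sum of limits.  Such a [u] is an average of the powers of the Cayley
   transform of the skew element [i eps j^* j]; these powers are unitaries of the
   unitization, and right multiplication by a unitary does not increase the norm. *)

From Stdlib Require Import Reals Lra Lia ClassicalEpsilon.
From Coquelicot Require Import Complex.

Declare Scope cstar_scope.
Delimit Scope cstar_scope with cs.
Bind Scope cstar_scope with car.
Notation "0" := zero : cstar_scope.
Infix "+" := add : cstar_scope.
Infix "*" := mul : cstar_scope.
Notation "- x" := (opp x) : cstar_scope.
Notation "x - y" := (add x (opp y)) : cstar_scope.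
Infix "*:" := scal (at level 40) : cstar_scope.
Notation "x ^*" := (star x) (at level 2, format "x ^*") : cstar_scope.
Arguments add {c} (_ _)%_cs.
Arguments mul {c} (_ _)%_cs.
Arguments opp {c} _%_cs.
Arguments star {c} _%_cs.
Arguments scal {c} _ _%_cs.
Arguments norm {c} _%_cs.
Open Scope R_scope.

Lemma half_pow_pos n : 0 < (/2)^n.
Proof. apply pow_lt; lra. Qed.

Lemma half_pow_small (K eps : R) : 0 < eps ->
  exists N, forall n, (N <= n)%nat -> K * (/2)^n < eps.
Proof.
  intro He.
  destruct (pow_lt_1_zero (/2) ltac:(rewrite Rabs_pos_eq; lra) (eps / (Rabs K + 1)))
    as [N HN].
  { apply Rdiv_lt_0_compat; [lra | pose proof (Rabs_pos K); lra]. }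
  exists N. intros n Hn. specialize (HN n Hn).
  rewrite Rabs_pos_eq in HN by (left; apply half_pow_pos).
  pose proof (half_pow_pos n). pose proof (Rle_abs K). pose proof (Rabs_pos K).
  apply Rmult_lt_compat_l with (r := Rabs K + 1) in HN; [|lra].
  replace ((Rabs K + 1) * (eps / (Rabs K + 1))) with eps in HN by (field; lra).
  nra.
Qed.

(* Bernoulli's inequality for [t / t'] contradicts the uniform bound if [t' < t]. *)
Lemma le_of_pow2_bound (t t' M : R) : 0 <= t -> 0 <= t' ->
  (forall k, t ^ (2 ^ k) <= M * t' ^ (2 ^ k)) -> t <= t'.
Proof.
  intros Ht Ht' H. apply Rnot_lt_le. intro Hlt.
  destruct (Req_dec t' 0) as [E|E].
  { specialize (H O). rewrite E in H. simpl in H. lra. }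
  set (h := t / t' - 1).
  assert (Hh : 0 < h).
  { unfold h. apply Rlt_0_minus. apply Rmult_lt_reg_r with t'; [lra|].
    field_simplify; lra. }
  destruct (INR_unbounded (M / h)) as [k Hk].
  specialize (H k). set (n := (2 ^ k)%nat) in H.
  assert (Hkn : INR k <= INR n) by (apply le_INR, Nat.lt_le_incl, Nat.pow_gt_lin_r; lia).
  replace t with (t' * (1 + h)) in H by (unfold h; field; lra).
  rewrite Rpow_mult_distr in H.
  assert (Hpos : 0 < t' ^ n) by (apply pow_lt; lra).
  assert (Hq : (1 + h) ^ n <= M).
  { apply Rmult_le_reg_l with (t' ^ n); [lra|]. lra. }
  pose proof (poly n h Hh).
  assert (M < INR k * h).
  { apply Rmult_lt_compat_r with (r := h) in Hk; [|lra].
    unfold Rdiv in Hk. rewrite Rmult_assoc, Rinv_l in Hk; lra. }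
  nra.
Qed.

Open Scope cstar_scope.

Section Algebra.
Context {A : CStar}.
Implicit Types x y z : A.

Lemma add_0_r x : x + 0 = x.
Proof. rewrite add_comm; apply add_0. Qed.

Lemma add_opp_r x : x - x = 0.
Proof. rewrite add_comm; apply add_opp. Qed.

Lemma add_cancel_l x y z : x + y = x + z -> y = z.
Proof.
  intro H. rewrite <- (add_0 _ y), <- (add_0 _ z), <- (add_opp _ x).
  rewrite <- !add_assoc, H. reflexivity.
Qed.

Lemma opp_unique x y : x + y = 0 -> y = - x.
Proof. intro H. apply (add_cancel_l x). rewrite H, add_opp_r. reflexivity. Qed.

Lemma opp_involutive x : - - x = x.
Proof. symmetry. apply opp_unique, add_opp. Qed.

Lemma opp_add_distr x y : - (x + y) = - x - y.
Proof.
  symmetry. apply opp_unique.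
  rewrite (add_comm _ (- x)), add_assoc, <- (add_assoc _ x), add_opp_r, add_0_r, add_opp_r.
  reflexivity.
Qed.

Lemma opp_0 : - 0 = (0 : A).
Proof. symmetry; apply opp_unique, add_0. Qed.

Lemma sub_eq_0 x y : x - y = 0 -> x = y.
Proof.
  intro H. apply opp_unique in H. rewrite <- (opp_involutive y), H, opp_involutive. reflexivity.
Qed.

Lemma mul_0_l x : 0 * x = 0.
Proof. apply (add_cancel_l (0 * x)). rewrite <- mul_distr_r, add_0, add_0_r. reflexivity. Qed.

Lemma mul_0_r x : x * 0 = 0.
Proof. apply (add_cancel_l (x * 0)). rewrite <- mul_distr_l, add_0, add_0_r. reflexivity. Qed.

Lemma mul_opp_l x y : - x * y = - (x * y).
Proof. apply opp_unique. rewrite <- mul_distr_r, add_opp_r, mul_0_l. reflexivity. Qed.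

Lemma mul_opp_r x y : x * - y = - (x * y).
Proof. apply opp_unique. rewrite <- mul_distr_l, add_opp_r, mul_0_r. reflexivity. Qed.

Lemma scal_0_l x : RtoC 0 *: x = 0.
Proof.
  apply (add_cancel_l (RtoC 0 *: x)). rewrite <- scal_distr_r, add_0_r.
  f_equal. apply injective_projections; simpl; ring.
Qed.

Lemma scal_0_r (c : C) : c *: 0 = (0 : A).
Proof. apply (add_cancel_l (c *: 0)). rewrite <- scal_distr_l, !add_0_r. reflexivity. Qed.

Lemma scal_opp_l (c : C) x : Copp c *: x = - (c *: x).
Proof.
  apply opp_unique. rewrite <- scal_distr_r.
  replace (Cplus c (Copp c)) with (RtoC 0) by (apply injective_projections; simpl; ring).
  apply scal_0_l.
Qed.

Lemma scal_opp_r (c : C) x : c *: - x = - (c *: x).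
Proof. apply opp_unique. rewrite <- scal_distr_l, add_opp_r. apply scal_0_r. Qed.

Lemma star_0 : (0 : A)^* = 0.
Proof.
  rewrite <- (scal_0_l 0) at 1. rewrite star_scal.
  replace (Cconj (RtoC 0)) with (RtoC 0) by (apply injective_projections; simpl; ring).
  apply scal_0_l.
Qed.

Lemma star_opp x : (- x)^* = - x^*.
Proof. apply opp_unique. rewrite <- star_add, add_opp_r. apply star_0. Qed.

Lemma norm_0 : norm (0 : A) = 0%R.
Proof. rewrite <- (scal_0_l 0), norm_scal, Cmod_0. ring. Qed.

Lemma norm_opp x : norm (- x) = norm x.
Proof.
  rewrite <- (scal_1 _ x) at 1. rewrite <- scal_opp_l, norm_scal.
  replace (Copp (RtoC 1)) with (RtoC (-1)) by (apply injective_projections; simpl; ring).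
  rewrite Cmod_R. unfold Rabs; destruct Rcase_abs; lra.
Qed.

Lemma norm_nonneg x : 0 <= norm x.
Proof. pose proof (norm_triangle _ x (- x)). rewrite add_opp_r, norm_0, norm_opp in H. lra. Qed.

Lemma norm_sub_sym x y : norm (x - y) = norm (y - x).
Proof. rewrite <- norm_opp, opp_add_distr, opp_involutive, add_comm. reflexivity. Qed.

Lemma norm_sub_triangle x y z : norm (x - z) <= norm (x - y) + norm (y - z).
Proof.
  replace (x - z) with ((x - y) + (y - z)). apply norm_triangle.
  rewrite <- add_assoc, (add_assoc _ (- y)), add_opp, add_0. reflexivity.
Qed.

(* The C*-identity makes the star isometric: [|x|^2 = |x^* x| <= |x^*| |x|]. *)
Lemma norm_star x : norm x^* = norm x.
Proof.
  assert (Hle : forall y : A, norm y <= norm y^*).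
  { intro y. destruct (Req_dec (norm y) 0) as [E|E].
    - rewrite E. apply norm_nonneg.
    - pose proof (norm_cstar _ y). pose proof (norm_mul _ y^* y). pose proof (norm_nonneg y).
      apply Rmult_le_reg_r with (norm y); lra. }
  apply Rle_antisym; [rewrite <- (star_invol _ x) at 2|]; apply Hle.
Qed.

Lemma norm_le_eps_eq_0 x : (forall eps, 0 < eps -> norm x <= eps) -> x = 0.
Proof.
  intro H. apply norm_eq0. pose proof (norm_nonneg x).
  destruct (Req_dec (norm x) 0) as [|E]; auto. specialize (H (norm x / 2)). lra.
Qed.

End Algebra.

Lemma pull_last {A : CStar} (l l' u t : A) : l = l' + t -> l + u = (l' + u) + t.
Proof. intros ->. rewrite <- !add_assoc, (add_comm _ t). reflexivity. Qed.

Lemma pull_only {A : CStar} (t : A) : t = 0 + t.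
Proof. symmetry; apply add_0. Qed.

Lemma add_eq_r {A : CStar} (x y t : A) : x = y -> x + t = y + t.
Proof. intros ->; reflexivity. Qed.

Lemma eq_add_sub_r {A : CStar} (l r t : A) : l = r + (t - t) -> l = r.
Proof. intros ->. rewrite add_opp_r, add_0_r. reflexivity. Qed.

(* [pull t l] proves [l = l' + t], where [l'] is the left-associated sum [l] with one
   occurrence of the summand [t] removed. *)
Ltac pull t l :=
  lazymatch l with
  | add ?l1 t => constr:(@eq_refl _ l)
  | add ?l1 ?u => let p := pull t l1 in constr:(pull_last _ _ u t p)
  | t => constr:(pull_only t)
  end.

Ltac add_ac_loop :=
  lazymatch goal with
  | |- ?l = ?l => reflexivity
  | |- ?l = add ?r ?t =>
      let p := pull t l in
      refine (eq_trans p _); apply add_eq_r; rewrite ?add_0; add_ac_loop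
  end.

Ltac add_ac := rewrite ?add_assoc; add_ac_loop.

(* Adds [t - t] to the right-hand side, for identities in which [t] cancels on the left. *)
Ltac cancel_with t := apply (eq_add_sub_r _ _ t).

Ltac expand :=
  repeat progress rewrite ?scal_distr_l, ?mul_distr_l, ?mul_distr_r, ?mul_scal_l, ?mul_scal_r,
    ?scal_assoc, ?mul_opp_l, ?mul_opp_r, ?opp_add_distr, ?opp_involutive, ?mul_assoc.

Section Limits.
Context {A : CStar}.
Implicit Types x y z : A.

Lemma conv_const x : conv (fun _ => x) x.
Proof. intros eps He. exists O. intros. rewrite add_opp_r, norm_0. lra. Qed.

Lemma conv_unique (u : nat -> A) x y : conv u x -> conv u y -> x = y.
Proof.
  intros Hx Hy. apply sub_eq_0, norm_le_eps_eq_0. intros eps He.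
  destruct (Hx (eps / 2)%R) as [N1 H1]; [lra|]. destruct (Hy (eps / 2)%R) as [N2 H2]; [lra|].
  specialize (H1 (N1 + N2)%nat ltac:(lia)). specialize (H2 (N1 + N2)%nat ltac:(lia)).
  rewrite norm_sub_sym in H1. pose proof (norm_sub_triangle x (u (N1 + N2)%nat) y). lra.
Qed.

Lemma conv_S (u : nat -> A) x : conv u x -> conv (fun n => u (S n)) x.
Proof. intros Hc eps He. destruct (Hc eps He) as [N HN]. exists N. intros n Hn. apply HN. lia. Qed.

Lemma conv_lipschitz (F : A -> A) (K : R) (u : nat -> A) x :
  (forall y z, norm (F y - F z) <= K * norm (y - z)) ->
  conv u x -> conv (fun n => F (u n)) (F x).
Proof.
  intros HK Hc eps He.
  set (K' := (Rabs K + 1)%R).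
  assert (HK' : 0 < K') by (unfold K'; pose proof (Rabs_pos K); lra).
  destruct (Hc (eps / K')%R) as [N HN]; [apply Rdiv_lt_0_compat; lra|].
  exists N. intros n Hn. specialize (HN n Hn). specialize (HK (u n) x).
  pose proof (norm_nonneg (u n - x)). pose proof (Rle_abs K).
  apply Rmult_lt_compat_l with (r := K') in HN; [|lra].
  replace (K' * (eps / K'))%R with eps in HN by (field; lra).
  unfold K' in *. nra.
Qed.

Lemma conv_fixpoint (G : A -> A) (K : R) (u : nat -> A) x :
  (forall y z, norm (G y - G z) <= K * norm (y - z)) ->
  (forall n, u (S n) = G (u n)) -> conv u x -> G x = x.
Proof.
  intros HK Hu Hc. apply (conv_unique (fun n => G (u n))); [apply (conv_lipschitz G K); auto|].
  intros eps He. destruct (conv_S _ _ Hc eps He) as [N HN].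
  exists N. intros n Hn. rewrite <- Hu. apply HN, Hn.
Qed.

Lemma conv_add (u v : nat -> A) x y : conv u x -> conv v y -> conv (fun n => u n + v n) (x + y).
Proof.
  intros Hu Hv eps He.
  destruct (Hu (eps / 2)%R) as [N1 H1]; [lra|]. destruct (Hv (eps / 2)%R) as [N2 H2]; [lra|].
  exists (N1 + N2)%nat. intros n Hn.
  replace (u n + v n - (x + y)) with ((u n - x) + (v n - y)) by (rewrite opp_add_distr; add_ac).
  eapply Rle_lt_trans; [apply norm_triangle|].
  specialize (H1 n ltac:(lia)). specialize (H2 n ltac:(lia)). lra.
Qed.

Lemma conv_geometric (u : nat -> A) x (K : R) :
  (forall n, norm (u n - x) <= K * (/2)^n) -> conv u x.
Proof.
  intros H eps He. destruct (half_pow_small K eps He) as [N HN].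
  exists N. intros n Hn. specialize (H n). specialize (HN n Hn). lra.
Qed.

Lemma geometric_limit (f : nat -> A) (K : R) :
  (forall n, norm (f (S n) - f n) <= K * (/2)^n) ->
  exists l, forall n, norm (f n - l) <= 2 * K * (/2)^n.
Proof.
  intro H.
  assert (Htail : forall k n, norm (f (k + n)%nat - f n) <= 2 * K * (/2)^n - 2 * K * (/2)^(k + n)).
  { induction k as [|k IH]; intro n.
    - simpl. rewrite add_opp_r, norm_0. lra.
    - eapply Rle_trans; [apply (norm_sub_triangle _ (f (k + n)%nat))|].
      specialize (H (k + n)%nat). specialize (IH n). simpl plus. simpl pow. lra. }
  assert (Hmn : forall m n, (n <= m)%nat -> norm (f m - f n) <= 2 * K * (/2)^n).
  { intros m n Hle. replace m with ((m - n) + n)%nat by lia.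
    specialize (Htail (m - n)%nat n). pose proof (H O). simpl in H0.
    pose proof (norm_nonneg (f 1%nat - f O)). pose proof (half_pow_pos (m - n + n)).
    assert (0 <= K) by lra. nra. }
  destruct (complete A f) as [l Hl].
  { intros eps He. destruct (half_pow_small (2 * K)%R eps He) as [N HN].
    exists N. intros m n Hm Hn. destruct (Nat.le_ge_cases n m) as [Hle|Hle].
    - specialize (Hmn m n Hle). specialize (HN n Hn). lra.
    - specialize (Hmn n m Hle). specialize (HN m Hm). rewrite norm_sub_sym. lra. }
  exists l. intro n. apply Rnot_lt_le. intro Hlt.
  destruct (Hl (norm (f n - l) - 2 * K * (/2)^n)%R) as [N HN]; [lra|].
  specialize (HN (N + n)%nat ltac:(lia)). specialize (Hmn (N + n)%nat n ltac:(lia)).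
  pose proof (norm_sub_triangle (f n) (f (N + n)%nat) l).
  rewrite norm_sub_sym in Hmn. lra.
Qed.

Lemma closure_idempotent (S : A -> Prop) x : in_closure (in_closure S) x -> in_closure S x.
Proof.
  intros [v [Hv Hc]].
  assert (Happrox : forall n, exists y, S y /\ norm (y - v n) <= (/2)^n).
  { intro n. destruct (Hv n) as [u [Hu Hcu]].
    destruct (Hcu ((/2)^n)) as [N HN]; [apply half_pow_pos|].
    exists (u N). split; auto. apply Rlt_le, HN. lia. }
  destruct (choice _ Happrox) as [y Hy].
  exists y. split; [intro n; apply Hy|].
  intros eps He. destruct (Hc (eps / 2)%R) as [N1 H1]; [lra|].
  destruct (half_pow_small 1 (eps / 2)%R) as [N2 H2]; [lra|].
  exists (N1 + N2)%nat. intros n Hn.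
  eapply Rle_lt_trans; [apply (norm_sub_triangle _ (v n))|].
  specialize (H1 n ltac:(lia)). specialize (H2 n ltac:(lia)). destruct (Hy n) as [_ Hyn]. lra.
Qed.

End Limits.

Section QuasiUnitaries.
Context {A : CStar}.
Implicit Types b d e w x : A.

(* [w] is a quasi-isometry (quasi-unitary) iff [1 + w] is an isometry (a unitary) of the
   unitization, and [qmul w x] corresponds to the product [(1 + w) (1 + x)]. *)
Definition quasi_isometry w := w + w^* + w^* * w = 0.
Definition quasi_unitary w := quasi_isometry w /\ quasi_isometry w^*.
Definition qmul w x := w + x + w * x.

Fixpoint qpow x k := match k with O => 0 | S k => qmul (qpow x k) x end.

(* [(1 + w)^* d (1 + w)] *)
Definition qconj w d := d + w^* * d + d * w + w^* * d * w.

Lemma star_qmul w x : (qmul w x)^* = qmul x^* w^*.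
Proof. unfold qmul. rewrite !star_add, star_mul. add_ac. Qed.

Lemma quasi_isometry_qmul w x :
  quasi_isometry w -> quasi_isometry x -> quasi_isometry (qmul w x).
Proof.
  unfold quasi_isometry. intros Hw Hx. rewrite star_qmul. unfold qmul.
  transitivity ((w + w^* + w^* * w) + (x + x^* + x^* * x) + x^* * (w + w^* + w^* * w)
                + (w + w^* + w^* * w) * x + x^* * (w + w^* + w^* * w) * x).
  - expand. add_ac.
  - rewrite Hw, Hx. repeat rewrite ?mul_0_l, ?mul_0_r, ?add_0. reflexivity.
Qed.

Lemma quasi_unitary_qmul w x : quasi_unitary w -> quasi_unitary x -> quasi_unitary (qmul w x).
Proof.
  intros [Hw Hw'] [Hx Hx']. split; [|rewrite star_qmul]; apply quasi_isometry_qmul; auto.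
Qed.

Lemma quasi_unitary_0 : quasi_unitary (0 : A).
Proof.
  assert (H : quasi_isometry (0 : A)).
  { unfold quasi_isometry. rewrite star_0, mul_0_r, !add_0. reflexivity. }
  split; [|rewrite star_0]; exact H.
Qed.

Lemma quasi_unitary_qpow x k : quasi_unitary x -> quasi_unitary (qpow x k).
Proof.
  intro Hx. induction k as [|k IH]; simpl; [apply quasi_unitary_0|].
  apply quasi_unitary_qmul; auto.
Qed.

Lemma qpow_comm x y k : y * x = x * y -> y * qpow x k = qpow x k * y.
Proof.
  intro H. induction k as [|k IH]; simpl; [rewrite mul_0_l, mul_0_r; reflexivity|].
  unfold qmul. rewrite !mul_distr_l, !mul_distr_r, H, IH, mul_assoc, IH.
  rewrite <- !mul_assoc, H. reflexivity.
Qed.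

Lemma qpow_in_ideal (J : ideal A) x k : iset J x -> iset J (qpow x k).
Proof.
  intro Hx. induction k as [|k IH]; simpl; [apply i0|].
  unfold qmul. apply iadd; [apply iadd|apply imull]; auto.
Qed.

Lemma norm_quasi_isometry_le w : quasi_isometry w -> norm w <= 2.
Proof.
  unfold quasi_isometry. intro H.
  assert (E : w^* * w = - (w + w^*)).
  { apply opp_unique. rewrite add_comm, <- H. add_ac. }
  pose proof (norm_cstar _ w) as Hc. rewrite E, norm_opp in Hc.
  pose proof (norm_triangle _ w w^*). rewrite norm_star in H0.
  pose proof (norm_nonneg w). nra.
Qed.

(* [(1 + w)(1 + w)^* = 1] lets the inner factors cancel. *)
Lemma qconj_mul w d e : quasi_isometry w^* -> qconj w d * qconj w e = qconj w (d * e).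
Proof.
  unfold quasi_isometry. rewrite star_invol. intro H.
  set (D := d + w^* * d). set (E := e + e * w).
  transitivity (D * E + D * (w^* + w + w * w^*) * E).
  - unfold D, E, qconj. expand. add_ac.
  - rewrite H, mul_0_r, mul_0_l, add_0_r. unfold D, E, qconj. expand. add_ac.
Qed.

Lemma norm_qconj w d : norm (qconj w d) <= (1 + norm w) ^ 2 * norm d.
Proof.
  unfold qconj.
  pose proof (norm_triangle _ (d + w^* * d + d * w) (w^* * d * w)).
  pose proof (norm_triangle _ (d + w^* * d) (d * w)).
  pose proof (norm_triangle _ d (w^* * d)).
  pose proof (norm_mul _ w^* d). pose proof (norm_mul _ d w).
  pose proof (norm_mul _ (w^* * d) w).
  rewrite norm_star in *.
  pose proof (norm_nonneg w). pose proof (norm_nonneg d). pose proof (norm_nonneg (w^* * d)).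
  nra.
Qed.

Lemma star_mul_qconj b w : (b + b * w)^* * (b + b * w) = qconj w (b^* * b).
Proof. unfold qconj. rewrite star_add, star_mul. expand. add_ac. Qed.

Fixpoint sqr_iter d k := match k with O => d | S k => sqr_iter d k * sqr_iter d k end.

Lemma qconj_sqr_iter w d k :
  quasi_isometry w^* -> sqr_iter (qconj w d) k = qconj w (sqr_iter d k).
Proof. intro H. induction k as [|k IH]; simpl; [|rewrite IH, qconj_mul]; auto. Qed.

Lemma norm_sqr_iter d k : d^* = d -> norm (sqr_iter d k) = norm d ^ (2 ^ k).
Proof.
  intro Hd. induction k as [|k IH]; simpl; [ring|].
  assert (Hs : forall j, (sqr_iter d j)^* = sqr_iter d j).
  { induction j as [|j IHj]; simpl; [|rewrite star_mul, IHj]; auto. }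
  rewrite <- (Hs k) at 1. rewrite norm_cstar, IH, Nat.add_0_r, pow_add. reflexivity.
Qed.

(* With [c = b (1 + w)], the C*-identity gives [|c|^(2^(k+1)) = |(c^* c)^(2^k)|
   = |(1 + w)^* (b^* b)^(2^k) (1 + w)| <= (1 + |w|)^2 |b|^(2^(k+1))] for every [k]. *)
Lemma norm_add_mul_quasi_unitary b w : quasi_unitary w -> norm (b + b * w) <= norm b.
Proof.
  intros [_ Hw].
  set (c := b + b * w).
  assert (Hsa : forall y : A, (y^* * y)^* = y^* * y).
  { intro y. rewrite star_mul, star_invol. reflexivity. }
  assert (Hle : norm c * norm c <= norm b * norm b).
  { rewrite <- !norm_cstar.
    apply (le_of_pow2_bound _ _ ((1 + norm w) ^ 2)); try apply norm_nonneg.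
    intro k. rewrite <- !norm_sqr_iter by apply Hsa.
    unfold c. rewrite star_mul_qconj, qconj_sqr_iter by exact Hw. apply norm_qconj. }
  pose proof (norm_nonneg c). pose proof (norm_nonneg b). nra.
Qed.

Lemma norm_add_star_mul_quasi_unitary b w : quasi_unitary w -> norm (b + w^* * b) <= norm b.
Proof.
  intro Hw. rewrite <- norm_star, star_add, star_mul, star_invol, <- (norm_star b).
  apply norm_add_mul_quasi_unitary, Hw.
Qed.

End QuasiUnitaries.

Section QuasiInverse.
Context {A : CStar}.
Implicit Types a r x y : A.

Fixpoint neumann a n := match n with O => 0 | S n => - a - a * neumann a n end.

Lemma neumann_comm a n : a * neumann a n = neumann a n * a.
Proof.
  induction n as [|n IH]; simpl; [rewrite mul_0_l, mul_0_r; reflexivity|].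
  rewrite mul_distr_l, mul_distr_r, !mul_opp_l, !mul_opp_r, IH, mul_assoc, IH.
  reflexivity.
Qed.

Lemma neumann_in_ideal (J : ideal A) a n : iset J a -> iset J (neumann a n).
Proof.
  intro Ha. induction n as [|n IH]; simpl; [apply i0|].
  apply iadd; apply iopp; [|apply imull]; auto.
Qed.

Lemma neumann_step_sub a n :
  neumann a (S (S n)) - neumann a (S n) = - (a * (neumann a (S n) - neumann a n)).
Proof.
  change (neumann a (S (S n))) with (- a - a * neumann a (S n)).
  change (neumann a (S n)) with (- a - a * neumann a n) at 2.
  expand. cancel_with a. add_ac.
Qed.

Lemma norm_sub_mul_l a x y : norm (a * x - a * y) <= norm a * norm (x - y).
Proof. rewrite <- mul_opp_r, <- mul_distr_l. apply norm_mul. Qed.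

Lemma opp_sub_eq_add_eq_0 a r y : - a - y = r -> a + r + y = 0.
Proof. intros <-. rewrite add_assoc, add_opp_r, add_0, add_opp. reflexivity. Qed.

(* [r = sum_(n >= 1) (-a)^n] is the quasi-inverse of [a]: [(1 + a) (1 + r) = 1]. *)
Lemma quasi_inverse_in_ideal (J : ideal A) a : iset J a -> norm a <= /2 ->
  exists r, iset J r /\ a + r + a * r = 0 /\ a + r + r * a = 0.
Proof.
  intros HJa Ha.
  assert (Hstep : forall n, norm (neumann a (S n) - neumann a n) <= /2 * (/2)^n).
  { induction n as [|n IH].
    - simpl. rewrite mul_0_r, opp_0, !add_0_r, norm_opp. lra.
    - rewrite neumann_step_sub, norm_opp. eapply Rle_trans; [apply norm_mul|].
      pose proof (norm_nonneg a). pose proof (norm_nonneg (neumann a (S n) - neumann a n)).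
      pose proof (half_pow_pos n). simpl pow. nra. }
  destruct (geometric_limit _ _ Hstep) as [r Hr].
  pose proof (conv_geometric _ _ _ Hr) as Hconv.
  exists r. split; [|split].
  - apply iclosed. exists (neumann a). split; [intro n; apply neumann_in_ideal|]; auto.
  - apply opp_sub_eq_add_eq_0, (conv_fixpoint (fun x => - a - a * x) (norm a) (neumann a));
      auto.
    intros x y. rewrite <- norm_sub_mul_l, <- norm_opp. right. f_equal.
    expand. cancel_with a. add_ac.
  - apply opp_sub_eq_add_eq_0, (conv_fixpoint (fun x => - a - x * a) (norm a) (neumann a));
      [|intro n; simpl; rewrite neumann_comm; reflexivity|auto].
    intros x y. rewrite Rmult_comm, <- norm_opp. eapply Rle_trans; [|apply norm_mul].
    right. f_equal. expand. cancel_with a. add_ac.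
Qed.

End QuasiInverse.

Section PartialSums.
Context {A : CStar}.
Implicit Types b x : A.
Implicit Types f g : nat -> A.

Fixpoint partial_sum f n := match n with O => 0 | S n => partial_sum f n + f n end.

Lemma partial_sum_ext f g n : (forall k, f k = g k) -> partial_sum f n = partial_sum g n.
Proof. intro H. induction n as [|n IH]; simpl; [|rewrite IH, H]; reflexivity. Qed.

Lemma partial_sum_add f g n :
  partial_sum (fun k => f k + g k) n = partial_sum f n + partial_sum g n.
Proof. induction n as [|n IH]; simpl; [rewrite add_0|rewrite IH; add_ac]; reflexivity. Qed.

Lemma partial_sum_scal c f n : c *: partial_sum f n = partial_sum (fun k => c *: f k) n.
Proof. induction n as [|n IH]; simpl; [apply scal_0_r|rewrite scal_distr_l, IH; reflexivity]. Qed.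

Lemma partial_sum_mul_l x f n : x * partial_sum f n = partial_sum (fun k => x * f k) n.
Proof. induction n as [|n IH]; simpl; [apply mul_0_r|rewrite mul_distr_l, IH; reflexivity]. Qed.

Lemma partial_sum_mul_r x f n : partial_sum f n * x = partial_sum (fun k => f k * x) n.
Proof. induction n as [|n IH]; simpl; [apply mul_0_l|rewrite mul_distr_r, IH; reflexivity]. Qed.

Lemma partial_sum_star f n : (partial_sum f n)^* = partial_sum (fun k => (f k)^*) n.
Proof. induction n as [|n IH]; simpl; [apply star_0|rewrite star_add, IH; reflexivity]. Qed.

Lemma partial_sum_const b n : partial_sum (fun _ => b) n = RtoC (INR n) *: b.
Proof.
  induction n as [|n IH]; simpl partial_sum; [symmetry; apply scal_0_l|].
  rewrite IH. rewrite <- (scal_1 _ b) at 2. rewrite <- scal_distr_r, S_INR. f_equal.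
  apply injective_projections; simpl; ring.
Qed.

Lemma norm_partial_sum_le f n M :
  (forall k, norm (f k) <= M) -> norm (partial_sum f n) <= INR n * M.
Proof.
  intro H. induction n as [|n IH]; simpl partial_sum; [rewrite norm_0; simpl; lra|].
  rewrite S_INR. eapply Rle_trans; [apply norm_triangle|]. specialize (H n). lra.
Qed.

Lemma partial_sum_in_ideal (J : ideal A) f n : (forall k, iset J (f k)) -> iset J (partial_sum f n).
Proof. intro H. induction n as [|n IH]; simpl; [apply i0|apply iadd; auto]. Qed.

End PartialSums.

Section ApproximateUnit.
Context {A : CStar}.
Implicit Types a b j r x : A.

(* [1 + (r + r)] is the Cayley transform [(1 - a) (1 + a)^-1] of the skew element [a]. *)
Lemma cayley_quasi_isometry a r : a^* = - a -> a + r + a * r = 0 -> quasi_isometry (r + r).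
Proof.
  intros Ha E.
  assert (Es : - a + r^* - r^* * a = 0).
  { rewrite <- star_0, <- E, !star_add, star_mul, Ha, mul_opp_r. reflexivity. }
  set (p := r^* + r + r^* * r + r^* * r).
  assert (Hp : p = 0).
  { transitivity (r^* * (a + r + a * r) + (- a + r^* - r^* * a) * r
                  + (a + r + a * r) + (- a + r^* - r^* * a)).
    - unfold p. expand. symmetry.
      cancel_with (r^* * a * r). cancel_with (a * r). cancel_with a. cancel_with (r^* * a).
      add_ac.
    - rewrite E, Es, mul_0_r, mul_0_l, !add_0. reflexivity. }
  unfold quasi_isometry. rewrite star_add. transitivity (p + p).
  - unfold p. expand. add_ac.
  - rewrite Hp, add_0. reflexivity.
Qed.

Lemma cayley_quasi_unitary a r : a^* = - a -> a + r + a * r = 0 -> a + r + r * a = 0 ->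
  quasi_unitary (r + r).
Proof.
  intros Ha E1 E2. split; [apply (cayley_quasi_isometry a); auto|].
  rewrite star_add. apply (cayley_quasi_isometry (- a)).
  - rewrite star_opp, Ha. reflexivity.
  - rewrite <- star_0, <- E2, !star_add, star_mul, Ha. reflexivity.
Qed.

(* With [1 + w_k = (1 + x)^k], the terms telescope: [2 a (1 + w_k) = (w_k - w_(k+1)) (1 + a)]. *)
Lemma cayley_telescope a x N : a * x = x * a -> a + a + x + x * a = 0 ->
  partial_sum (fun k => (a + a) + (a + a) * qpow x k) N = - (qpow x N + qpow x N * a).
Proof.
  intros Hc Hx. induction N as [|N IH]; simpl partial_sum; simpl qpow.
  - rewrite mul_0_l, add_0, opp_0. reflexivity.
  - rewrite IH. set (w := qpow x N).
    assert (Hw : (a + a) * w = w * (a + a)).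
    { unfold w. rewrite mul_distr_l, mul_distr_r, qpow_comm; auto. }
    assert (Ha : a + a = - (x + x * a)).
    { apply opp_unique. rewrite <- Hx. add_ac. }
    rewrite Hw, Ha. unfold qmul. expand. add_ac.
Qed.

Lemma norm_cayley_sum_le a r N : a^* = - a -> norm a <= /2 ->
  a + r + a * r = 0 -> a + r + r * a = 0 ->
  norm (partial_sum (fun k => (a + a) + (a + a) * qpow (r + r) k) N) <= 3.
Proof.
  intros Ha Hna E1 E2.
  assert (Hc : a * (r + r) = (r + r) * a).
  { assert (a * r = r * a) by (apply (add_cancel_l (a + r)); rewrite E1, E2; reflexivity).
    rewrite mul_distr_l, mul_distr_r, H. reflexivity. }
  assert (Hx : a + a + (r + r) + (r + r) * a = 0).
  { transitivity ((a + r + r * a) + (a + r + r * a)); [rewrite mul_distr_r; add_ac|].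
    rewrite E2, add_0. reflexivity. }
  rewrite cayley_telescope, norm_opp by auto.
  set (w := qpow (r + r) N).
  assert (Hw : norm w <= 2).
  { apply norm_quasi_isometry_le, quasi_unitary_qpow, (cayley_quasi_unitary a); auto. }
  eapply Rle_trans; [apply norm_triangle|].
  pose proof (norm_mul _ w a). pose proof (norm_nonneg w). pose proof (norm_nonneg a). nra.
Qed.

(* [1 - qmean x N] is the average of the unitaries [(1 + x)^k], [k < N]. *)
Definition qmean x N := - (RtoC (/ INR N) *: partial_sum (qpow x) N).

Lemma sub_mul_qmean b x N : (0 < N)%nat ->
  b - b * qmean x N = RtoC (/ INR N) *: partial_sum (fun k => b + b * qpow x k) N.
Proof.
  intro HN. assert (0 < INR N) by (apply lt_0_INR; exact HN).
  rewrite partial_sum_add, partial_sum_const, scal_distr_l, scal_assoc, <- partial_sum_mul_l.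
  unfold qmean. rewrite mul_opp_r, opp_involutive, mul_scal_r.
  replace (Cmult (RtoC (/ INR N)) (RtoC (INR N))) with (RtoC 1)
    by (apply injective_projections; simpl; field; lra).
  rewrite scal_1. reflexivity.
Qed.

Lemma Cmod_inv_INR N : (0 < N)%nat -> Cmod (RtoC (/ INR N)) = / INR N.
Proof.
  intro HN. rewrite Cmod_R, Rabs_pos_eq; [reflexivity|].
  apply Rlt_le, Rinv_0_lt_compat, lt_0_INR, HN.
Qed.

Lemma norm_sub_mul_qmean_le b x N : quasi_unitary x -> (0 < N)%nat ->
  norm (b - b * qmean x N) <= norm b.
Proof.
  intros Hx HN. assert (0 < INR N) by (apply lt_0_INR; exact HN).
  rewrite sub_mul_qmean, norm_scal, Cmod_inv_INR by exact HN.
  pose proof (norm_partial_sum_le (fun k => b + b * qpow x k) N (norm b)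
               (fun k => norm_add_mul_quasi_unitary b _ (quasi_unitary_qpow x k Hx))).
  apply Rmult_le_compat_l with (r := (/ INR N)%R) in H0; [|apply Rlt_le, Rinv_0_lt_compat; lra].
  replace (/ INR N * (INR N * norm b))%R with (norm b) in H0 by (field; lra). exact H0.
Qed.

Lemma norm_sub_mul_qmean_sq j x N : quasi_unitary x -> (0 < N)%nat ->
  (INR N * norm (j - j * qmean x N)) ^ 2
  <= INR N * norm (partial_sum (fun k => j^* * j + j^* * j * qpow x k) N).
Proof.
  intros Hx HN. assert (0 < INR N) by (apply lt_0_INR; exact HN).
  set (c := partial_sum (fun k => j + j * qpow x k) N).
  set (Y := partial_sum (fun k => j^* * j + j^* * j * qpow x k) N).
  assert (Hj : (INR N * norm (j - j * qmean x N))%R = norm c).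
  { rewrite sub_mul_qmean, norm_scal, Cmod_inv_INR by exact HN. fold c. field. lra. }
  assert (Hcc : c^* * c = partial_sum (fun l => Y + (qpow x l)^* * Y) N).
  { unfold c at 1. rewrite partial_sum_star, partial_sum_mul_r. apply partial_sum_ext. intro l.
    rewrite star_add, star_mul, mul_distr_r, <- mul_assoc.
    replace (j^* * c) with Y; [reflexivity|].
    unfold c, Y. rewrite partial_sum_mul_l. apply partial_sum_ext. intro k.
    rewrite mul_distr_l, mul_assoc. reflexivity. }
  rewrite Hj. simpl pow. rewrite Rmult_1_r, <- norm_cstar, Hcc.
  apply norm_partial_sum_le. intro l.
  apply norm_add_star_mul_quasi_unitary, quasi_unitary_qpow, Hx.
Qed.

Lemma approximate_unit (J : ideal A) j (delta : R) : iset J j -> 0 < delta ->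
  exists u, iset J u /\ norm (j - j * u) <= delta /\ forall b, norm (b - b * u) <= norm b.
Proof.
  intros Hj Hd.
  set (s := j^* * j).
  assert (Hs : iset J s) by (apply imull; exact Hj).
  assert (Hss : s^* = s) by (unfold s; rewrite star_mul, star_invol; reflexivity).
  pose proof (norm_nonneg s) as Hns.
  set (eps := (/ (2 * (norm s + 1)))%R).
  assert (He : 0 < eps) by (apply Rinv_0_lt_compat; lra).
  assert (Hes : eps * norm s <= /2).
  { apply Rmult_le_reg_l with (2 * (norm s + 1))%R; [lra|]. unfold eps. field_simplify; lra. }
  set (c := Cmult Ci (RtoC eps)).
  assert (Hc : Cmod c = eps) by (unfold c; rewrite Cmod_mult, Cmod_Ci, Cmod_R, Rabs_pos_eq; lra).
  set (a := c *: s).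
  assert (Hna : norm a <= /2) by (unfold a; rewrite norm_scal, Hc; lra).
  assert (Ha : a^* = - a).
  { unfold a. rewrite star_scal, Hss, <- scal_opp_l. f_equal.
    unfold c. apply injective_projections; simpl; ring. }
  destruct (quasi_inverse_in_ideal J a) as [r [Hr [E1 E2]]]; [apply iscal; exact Hs|exact Hna|].
  set (x := r + r).
  assert (Hx : quasi_unitary x) by (apply (cayley_quasi_unitary a); auto).
  destruct (INR_unbounded (3 / (2 * eps * (delta * delta)))) as [N HN].
  assert (HN3 : 3 < INR N * (2 * eps * (delta * delta))).
  { assert (0 < 2 * eps * (delta * delta)) by (apply Rmult_lt_0_compat; nra).
    apply Rmult_lt_compat_r with (r := (2 * eps * (delta * delta))%R) in HN; [|lra].
    unfold Rdiv in HN. rewrite Rmult_assoc, Rinv_l in HN; lra. }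
  assert (HN0 : (0 < N)%nat).
  { destruct N; [simpl in HN3; lra|lia]. }
  assert (HN0' : 0 < INR N) by (apply lt_0_INR; exact HN0).
  set (Y := partial_sum (fun k => s + s * qpow x k) N).
  assert (HY : 2 * eps * norm Y <= 3).
  { assert (E : Cplus c c *: Y = partial_sum (fun k => (a + a) + (a + a) * qpow x k) N).
    { unfold Y. rewrite partial_sum_scal. apply partial_sum_ext. intro k.
      unfold a. rewrite scal_distr_l, !scal_distr_r, mul_distr_r, !mul_scal_l. reflexivity. }
    assert (Hcc : Cmod (Cplus c c) = (2 * eps)%R).
    { replace (Cplus c c) with (Cmult (RtoC 2) c) by (apply injective_projections; simpl; ring).
      rewrite Cmod_mult, Hc, Cmod_R, Rabs_pos_eq; lra. }
    rewrite <- Hcc, <- norm_scal, E. apply (norm_cayley_sum_le a r); auto. }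
  exists (qmean x N). split; [|split].
  - apply iopp, iscal, partial_sum_in_ideal. intro k. apply qpow_in_ideal, iadd; exact Hr.
  - pose proof (norm_sub_mul_qmean_sq j x N Hx HN0) as Hsq. fold s Y in Hsq.
    set (d := norm (j - j * qmean x N)) in Hsq |- *.
    assert (0 <= d) by apply norm_nonneg.
    assert (Hd2 : INR N * (d * d) * (2 * eps) <= 3).
    { apply Rmult_le_reg_l with (INR N); [lra|]. simpl pow in Hsq. nra. }
    nra.
  - intro b. apply norm_sub_mul_qmean_le; auto.
Qed.

End ApproximateUnit.

Section SumOfIdeals.
Context {A : CStar}.
Implicit Types x y z : A.

Lemma exists_inter_near (I J : ideal A) x y eps : iset I x -> iset J y -> 0 < eps ->
  exists z, iset I z /\ iset J z /\ norm (x - z) <= norm (x - y) + eps.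
Proof.
  intros Hx Hy He. destruct (approximate_unit J y eps Hy He) as [u [Hu [Hyu Hc]]].
  exists (x * u). split; [apply imulr|split; [apply imull|]]; auto.
  replace (x - x * u) with (((x - y) - (x - y) * u) + (y - y * u)).
  - eapply Rle_trans; [apply norm_triangle|]. specialize (Hc (x - y)). lra.
  - rewrite mul_distr_r, mul_opp_l. expand. cancel_with y. cancel_with (y * u). add_ac.
Qed.

Definition sum_set (I J : ideal A) x := exists y z, iset I y /\ iset J z /\ x = y + z.

(* Approximations [p_n + q_n] of [x] are corrected by [k_n] in [I ∩ J] (given by
   [exists_inter_near]) so that the [I]-parts [p_n - sum_(m<n) k_m] converge. *)
Lemma sum_set_closed (I J : ideal A) x : in_closure (sum_set I J) x -> sum_set I J x.
Proof.
  intros [v [Hv Hc]].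
  assert (Hpq : forall n, exists pq : A * A, iset I (fst pq) /\ iset J (snd pq) /\
                  norm (x - (fst pq + snd pq)) <= (/2)^n).
  { intro n. destruct (Hc ((/2)^n)%R) as [N HN]; [apply half_pow_pos|].
    destruct (Hv N) as [p [q [Hp [Hq E]]]]. exists (p, q). simpl. split; [|split]; auto.
    rewrite <- E, norm_sub_sym. apply Rlt_le, HN. lia. }
  destruct (choice _ Hpq) as [g Hg].
  set (p := fun n => fst (g n)). set (q := fun n => snd (g n)).
  assert (Hk : forall n, exists k, iset I k /\ iset J k /\
                 norm ((p (S n) - p n) - k) <= 3 * (/2)^n).
  { intro n. destruct (Hg n) as [Hp0 [Hq0 H0]]. destruct (Hg (S n)) as [Hp1 [Hq1 H1]].
    destruct (exists_inter_near I J (p (S n) - p n) (q n - q (S n)) ((/2)^n)%R)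
      as [k [HkI [HkJ Hk]]]; [apply iadd, iopp; auto|apply iadd, iopp; auto|apply half_pow_pos|].
    exists k. split; [|split]; auto. eapply Rle_trans; [apply Hk|].
    replace ((p (S n) - p n) - (q n - q (S n)))
      with ((x - (p n + q n)) - (x - (p (S n) + q (S n))))
      by (expand; cancel_with x; add_ac).
    pose proof (norm_triangle _ (x - (p n + q n)) (- (x - (p (S n) + q (S n))))) as T.
    rewrite norm_opp in T.
    change (norm (x - (p n + q n)) <= (/2)^n) in H0.
    change (norm (x - (p (S n) + q (S n))) <= /2 * (/2)^n) in H1.
    pose proof (half_pow_pos n). lra. }
  destruct (choice _ Hk) as [k Hkk].
  set (p' := fun n => p n - partial_sum k n).
  assert (Hp'step : forall n, norm (p' (S n) - p' n) <= 3 * (/2)^n).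
  { intro n. unfold p'. simpl partial_sum.
    replace (p (S n) - (partial_sum k n + k n) - (p n - partial_sum k n))
      with ((p (S n) - p n) - k n)
      by (expand; symmetry; cancel_with (partial_sum k n); add_ac).
    apply Hkk. }
  destruct (geometric_limit p' 3 Hp'step) as [y Hy].
  exists y, (x - y). split; [|split].
  - apply iclosed. exists p'. split; [|exact (conv_geometric _ _ _ Hy)].
    intro n. apply iadd; [apply (Hg n)|apply iopp, partial_sum_in_ideal; intro m; apply Hkk].
  - apply iclosed. exists (fun n => q n + partial_sum k n). split.
    + intro n. apply iadd; [apply (Hg n)|apply partial_sum_in_ideal; intro m; apply Hkk].
    + apply (conv_geometric _ _ 7). intro n.
      replace (q n + partial_sum k n - (x - y))
        with (- (x - (p n + q n)) - (p' n - y))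
        by (unfold p'; expand; cancel_with (p n); add_ac).
      eapply Rle_trans; [apply norm_triangle|]. rewrite !norm_opp.
      destruct (Hg n) as [_ [_ H]]. specialize (Hy n).
      change (norm (x - (p n + q n)) <= (/2)^n) in H. lra.
  - rewrite add_comm, <- add_assoc, add_opp, add_0_r. reflexivity.
Qed.

End SumOfIdeals.

Section Ideals.
Context {A : CStar}.
Implicit Types x y : A.

Definition zero_ideal : ideal A.
Proof.
  refine (Build_ideal A (fun x => x = 0) eq_refl _ _ _ _ _ _ _).
  - intros x y -> ->. apply add_0.
  - intros x ->. apply opp_0.
  - intros c x ->. apply scal_0_r.
  - intros c x ->. apply mul_0_r.
  - intros c x ->. apply mul_0_l.
  - intros x ->. apply star_0.
  - intros x [u [Hu Hc]]. apply (conv_unique u); [exact Hc|].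
    intros eps He. exists O. intros n _. rewrite Hu, add_opp_r, norm_0. exact He.
Defined.

Lemma zero_ideal_trivial (x : ideal_cstar zero_ideal) : x = zero.
Proof. apply sub_eq. destruct x as [x Hx]. exact Hx. Qed.

Definition sum_ideal (I J : ideal A) : ideal A.
Proof.
  refine (Build_ideal A (sum_set I J) _ _ _ _ _ _ _ (sum_set_closed I J)).
  - exists 0, 0. split; [apply i0|split; [apply i0|symmetry; apply add_0]].
  - intros x y [p1 [q1 [H1 [H2 ->]]]] [p2 [q2 [H3 [H4 ->]]]].
    exists (p1 + p2), (q1 + q2). split; [apply iadd|split; [apply iadd|add_ac]]; auto.
  - intros x [p [q [H1 [H2 ->]]]]. exists (- p), (- q).
    split; [apply iopp|split; [apply iopp|apply opp_add_distr]]; auto.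
  - intros c x [p [q [H1 [H2 ->]]]]. exists (c *: p), (c *: q).
    split; [apply iscal|split; [apply iscal|apply scal_distr_l]]; auto.
  - intros c x [p [q [H1 [H2 ->]]]]. exists (c * p), (c * q).
    split; [apply imull|split; [apply imull|apply mul_distr_l]]; auto.
  - intros c x [p [q [H1 [H2 ->]]]]. exists (p * c), (q * c).
    split; [apply imulr|split; [apply imulr|apply mul_distr_r]]; auto.
  - intros x [p [q [H1 [H2 ->]]]]. exists p^*, q^*.
    split; [apply istar|split; [apply istar|apply star_add]]; auto.
Defined.

Lemma in_closure_self (S : A -> Prop) x : S x -> in_closure S x.
Proof. intro Hx. exists (fun _ => x). split; [intros _; exact Hx|apply conv_const]. Qed.

Lemma in_closure_lipschitz (S : A -> Prop) (G : A -> A) (K : R) :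
  (forall x, S x -> S (G x)) -> (forall x y, norm (G x - G y) <= K * norm (x - y)) ->
  forall x, in_closure S x -> in_closure S (G x).
Proof.
  intros HS HK x [u [Hu Hc]]. exists (fun n => G (u n)).
  split; [intro n; apply HS, Hu|apply (conv_lipschitz G K); auto].
Qed.

Lemma in_closure_add (S : A -> Prop) x y : (forall x y, S x -> S y -> S (x + y)) ->
  in_closure S x -> in_closure S y -> in_closure S (x + y).
Proof.
  intros HS [u [Hu Hcu]] [v [Hv Hcv]]. exists (fun n => u n + v n).
  split; [intro n; apply HS; auto|apply conv_add; auto].
Qed.

Section DirectedUnion.
Variables (L : Type) (le : L -> L -> Prop) (F : L -> ideal A).
Hypothesis F_directed : directed le.
Hypothesis F_monotone : forall l m, le l m -> forall x, iset (F l) x -> iset (F m) x.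

Definition union_set x := exists l, iset (F l) x.

Lemma union_set_add x y : union_set x -> union_set y -> union_set (x + y).
Proof.
  destruct F_directed as [_ [_ [_ Hub]]].
  intros [l Hx] [m Hy]. destruct (Hub l m) as [n [Hln Hmn]].
  exists n. apply iadd; [apply (F_monotone l)|apply (F_monotone m)]; auto.
Qed.

Lemma closure_union_lipschitz (G : A -> A) (K : R) :
  (forall l x, iset (F l) x -> iset (F l) (G x)) ->
  (forall x y, norm (G x - G y) <= K * norm (x - y)) ->
  forall x, in_closure union_set x -> in_closure union_set (G x).
Proof.
  intros HG. apply in_closure_lipschitz. intros x [l Hx]. exists l. apply HG, Hx.
Qed.

Definition closure_union_ideal : ideal A.
Proof.
  refine (Build_ideal A (in_closure union_set) _ _ _ _ _ _ _ (closure_idempotent union_set)).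
  - destruct F_directed as [[l] _]. apply in_closure_self. exists l. apply i0.
  - intros x y. apply in_closure_add, union_set_add.
  - apply (closure_union_lipschitz (fun x => - x) 1); [intros; apply iopp; auto|].
    intros x y. rewrite <- opp_add_distr, norm_opp. lra.
  - intro c. apply (closure_union_lipschitz (fun x => c *: x) (Cmod c));
      [intros; apply iscal; auto|].
    intros x y. rewrite <- scal_opp_r, <- scal_distr_l, norm_scal. lra.
  - intro c. apply (closure_union_lipschitz (fun x => c * x) (norm c));
      [intros; apply imull; auto|].
    intros x y. apply norm_sub_mul_l.
  - intro c. apply (closure_union_lipschitz (fun x => x * c) (norm c));
      [intros; apply imulr; auto|].
    intros x y. rewrite <- mul_opp_l, <- mul_distr_r, Rmult_comm. apply norm_mul.
  - apply (closure_union_lipschitz star 1); [intros; apply istar; auto|].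
    intros x y. rewrite <- star_opp, <- star_add, norm_star. lra.
Defined.

End DirectedUnion.

Lemma ideals_directed (P : CStar -> Prop) :
  P (ideal_cstar zero_ideal) ->
  (forall I J : ideal A,
     P (ideal_cstar I) -> P (ideal_cstar J) -> P (ideal_cstar (sum_ideal I J))) ->
  directed (fun I J : {I : ideal A | P (ideal_cstar I)} =>
              forall x, iset (proj1_sig I) x -> iset (proj1_sig J) x).
Proof.
  intros H0 Hsum. split; [constructor; exact (exist _ zero_ideal H0)|].
  split; [intros I x Hx; exact Hx|]. split; [intros I J K HIJ HJK x Hx; auto|].
  intros [I HI] [J HJ]. exists (exist _ (sum_ideal I J) (Hsum I J HI HJ)). simpl. split.
  - intros x Hx. exists x, 0. split; [exact Hx|split; [apply i0|symmetry; apply add_0_r]].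
  - intros x Hx. exists 0, x. split; [apply i0|split; [exact Hx|symmetry; apply add_0]].
Qed.

End Ideals.

Theorem corollary1p4 (P : CStar -> Prop)
  (H0 : forall A : CStar, (forall x : car A, x = zero) -> P A)
  (Hsum : forall (A : CStar) (I J K : ideal A),
      P (ideal_cstar I) -> P (ideal_cstar J) ->
      (forall x, iset K x <-> exists y z, iset I y /\ iset J z /\ x = add y z) ->
      P (ideal_cstar K))
  (Hunion : forall (A : CStar) (L : Type) (le : L -> L -> Prop) (F : L -> ideal A),
      directed le ->
      (forall l m, le l m -> forall x, iset (F l) x -> iset (F m) x) ->
      (forall l, P (ideal_cstar (F l))) ->
      forall K : ideal A,
      (forall x, iset K x <-> in_closure (fun y => exists l, iset (F l) y) x) ->
      P (ideal_cstar K)) :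
  admits_largest_ideals P.
Proof.
  intro A.
  set (le := fun I J : {I : ideal A | P (ideal_cstar I)} =>
               forall x, iset (proj1_sig I) x -> iset (proj1_sig J) x).
  assert (Hdir : directed le).
  { apply ideals_directed; [apply H0, zero_ideal_trivial|].
    intros I J HI HJ. apply (Hsum A I J); auto. intro x. reflexivity. }
  set (F := fun I : {I : ideal A | P (ideal_cstar I)} => proj1_sig I).
  assert (Hmono : forall I J, le I J -> forall x, iset (F I) x -> iset (F J) x) by auto.
  exists (closure_union_ideal _ le F Hdir Hmono). split.
  - apply (Hunion A _ le F Hdir Hmono); [intros [I HI]; exact HI|intro x; reflexivity].
  - intros J HJ x Hx. apply in_closure_self. exists (exist _ J HJ). exact Hx.
Qed.
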